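(* Let $G\simeq G'\rtimes A$ be a Frobenius group whose Frobenius kernel is the commutator subgroup $G'$ and with (necessarily abelian) Frobenius complement $A$. Then for every $x\in G\setminus G'$ one has $\mathrm{nr}(x)\notin\mathbb{Z}[G]$.
   Context: A Frobenius group is a finite group $G$ with a proper nontrivial subgroup $H$ (a Frobenius complement) such that $H\cap gHg^{-1}=\{1\}$ for all $g\in G\setminus H$; then there is a unique normal subgroup $N$ (the Frobenius kernel) with $G=N\rtimes H$. $\mathrm{nr}$ denotes the reduced norm of $\mathbb{Q}[G]$, with values in $\zeta(\mathbb{Q}[G])\subseteq\mathbb{Q}[G]$. *)

From mathcomp Require Import all_boot all_order all_algebra all_fingroup all_solvable all_field all_character frobenius.
Set Implicit Arguments. Unset Strict Implicit. Unset Printing Implicit Defensive.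
Import GRing.Theory Num.Theory.
Local Open Scope ring_scope.

(* Reduced norm of a group element x of G, viewed as an element of Q[G].
   After extension of scalars to algC, Q[G] (x) C = C[G] = prod_chi M_{chi(1)}(C),
   with central primitive idempotents
     e_chi = chi(1)/|G| * sum_g chi(g^-1) g,
   and the reduced norm is the determinant in each simple component:
     nr(x) = sum_chi det(rho_chi(x)) e_chi,
   where det(rho_chi(x)) = (cfDet chi) x.
   [nr_coef G x g] is the coefficient of g in nr(x) (an element of C[G]). *)
Definition nr_coef (gT : finGroupType) (G : {group gT}) (x g : gT) : algC :=
  \sum_(i : Iirr G)
     (cfDet 'chi[G]_i) x * ('chi[G]_i 1%g * 'chi[G]_i (g^-1)%g) / #|G|%:R.

Definition nr_in_ZG (gT : finGroupType) (G : {group gT}) (x : gT) : Prop :=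
  forall g : gT, g \in G -> nr_coef G x g \in Num.int.

From mathcomp Require Import all_boot all_order all_algebra all_fingroup all_solvable all_field all_character frobenius.
From mathcomp Require Import ring.

Set Implicit Arguments.
Unset Strict Implicit.
Unset Printing Implicit Defensive.

(* The coefficients c_g of nr(x) satisfy the orthogonality relations
   sum_g c_g chi(g) = det chi(x) chi(1) for every irreducible chi, hence
   sum_g |c_g|^2 = 1.  If they are rational integers, nr(x) is thus a single
   group element z, the trivial character forces z to carry coefficient 1, and
   |chi(z)| = chi(1) for all chi puts z in the centre.  A Frobenius group has
   trivial centre, so z = 1 and det chi(x) = 1 for all chi; applied to the
   linear characters, which are the characters of G/G', this gives x \in G'. *)

Import Order.TTheory GRing.Theory Num.Theory.
Local Open Scope ring_scope.

Lemma sum_sqr_int_eq1 (R : archiNumDomainType) (I : finType) (P : pred I)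
    (c : I -> R) :
  {in P, forall i, c i \is a Num.int} -> \sum_(i | P i) c i ^+ 2 = 1 ->
  exists2 i0, P i0 & forall i, P i -> i != i0 -> c i = 0.
Proof.
move=> Zc sum1.
have sqr_ge0 i : P i -> 0 <= c i ^+ 2.
  by move=> Pi; rewrite -intr_normK ?Zc // exprn_ge0.
have [i0 /andP[Pi0 nz_ci0] | c0] := pickP [pred i | P i && (c i != 0)]; last first.
  move: sum1; rewrite big1 => [/eqP|i Pi]; first by rewrite eq_sym oner_eq0.
  by move: (c0 i); rewrite /= Pi => /negbFE/eqP->; rewrite expr0n.
exists i0 => // i Pi ne_i_i0; apply/eqP; rewrite -sqrf_eq0; apply/eqP.
have rest0 : \sum_(j | P j && (j != i0)) c j ^+ 2 = 0.
  apply/eqP; rewrite eq_le sumr_ge0 ?andbT => [|j /andP[Pj _]]; last exact: sqr_ge0.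
  have -> : \sum_(j | P j && (j != i0)) c j ^+ 2 = 1 - c i0 ^+ 2.
    by rewrite -sum1 [in RHS](bigD1 i0) //= addrC addrK.
  by rewrite subr_le0 sqr_intr_ge1 ?Zc.
by apply: (psumr_eq0P _ rest0) => [j /andP[Pj _]|]; rewrite ?sqr_ge0 ?Pi.
Qed.

Section ReducedNormCoefficients.

Variables (gT : finGroupType) (G : {group gT}) (x : gT).
Local Notation c := (nr_coef G x).

Lemma nr_coef_dot_irr j :
  \sum_(g in G) c g * 'chi[G]_j g = cfDet 'chi_j x * 'chi_j 1%g.
Proof.
have dot_i i : \sum_(g in G) cfDet 'chi_i x * ('chi_i 1%g * 'chi_i g^-1%g)
                   / #|G|%:R * 'chi_j g = cfDet 'chi_i x * 'chi_i 1%g * '['chi_j, 'chi_i].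
  rewrite cfdotE !mulr_sumr; apply: eq_bigr => g _; rewrite irr_inv; ring.
under eq_bigr => g _ do rewrite /nr_coef mulr_suml.
rewrite exchange_big /=; under eq_bigr => i _ do rewrite dot_i cfdot_irr.
rewrite (bigD1 j) //= eqxx mulr1 big1 ?addr0 // => i ne_i_j.
by rewrite eq_sym (negbTE ne_i_j) mulr0.
Qed.

Lemma conjC_nr_coef g :
  (c g)^* = \sum_(i : Iirr G) (cfDet 'chi_i x * 'chi_i 1%g / #|G|%:R)^* * 'chi_i g.
Proof.
rewrite rmorph_sum; apply: eq_bigr => i _.
rewrite !rmorphM /= irr_inv conjCK; ring.
Qed.

Lemma nr_coef_norm_sum : x \in G -> \sum_(g in G) `|c g| ^+ 2 = 1.
Proof.
move=> Gx; under eq_bigr => g _ do rewrite normCK conjC_nr_coef mulr_sumr.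
rewrite exchange_big /=.
under eq_bigr => i _ do
  (under eq_bigr => g _ do rewrite mulrCA; rewrite -mulr_sumr nr_coef_dot_irr).
transitivity (\sum_(i : Iirr G) 'chi_i 1%g ^+ 2 / #|G|%:R); last first.
  by rewrite -mulr_suml irr_sum_square mulfV ?neq0CG.
apply: eq_bigr => i _.
have det_unit : (cfDet 'chi_i x)^* * cfDet 'chi_i x = 1.
  by rewrite mulrC -normCK normC_lin_char ?cfDet_lin_char ?expr1n.
have real_deg : ('chi_i 1%g)^* = 'chi_i 1%g by rewrite irr1_degree conjC_nat.
rewrite !rmorphM /= real_deg fmorphV /= conjC_nat.
transitivity ((cfDet 'chi_i x)^* * cfDet 'chi_i x * ('chi_i 1%g ^+ 2 / #|G|%:R)).
  by ring.
by rewrite det_unit mul1r.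
Qed.

Hypothesis Gx : x \in G.

Lemma nr_in_ZG_center : nr_in_ZG G x ->
  exists2 z, z \in 'Z(G)%g & forall i, 'chi[G]_i z = cfDet 'chi_i x * 'chi_i 1%g.
Proof.
move=> Zc; have sum_sqr1 : \sum_(g in G) c g ^+ 2 = 1.
  by rewrite -(nr_coef_norm_sum Gx); apply: eq_bigr => g Gg; rewrite intr_normK ?Zc.
have [z Gz c_supp] := sum_sqr_int_eq1 (P := [in G]) Zc sum_sqr1.
have dot_z (i : Iirr G) : c z * 'chi_i z = cfDet 'chi_i x * 'chi_i 1%g.
  rewrite -nr_coef_dot_irr (bigD1 z) //= big1 ?addr0 // => g /andP[Gg ne_gz].
  by rewrite c_supp ?mul0r.
have cz1 : c z = 1.
  have := dot_z 0; rewrite irr0 cfDet_id ?cfun1_lin_char //.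
  by rewrite !cfun1E Gz Gx group1 !mulr1.
exists z => [|i]; last by rewrite -dot_z cz1 mul1r.
rewrite -cap_cfcenter_irr; apply/bigcapP => i _; rewrite irr_cfcenterE //.
rewrite -[_ z]mul1r -cz1 dot_z normrM normC_lin_char ?cfDet_lin_char // mul1r.
by rewrite ger0_norm ?ltW ?irr1_gt0.
Qed.

Lemma nr_in_ZG_der1 : 'Z(G)%g = 1%g -> nr_in_ZG G x -> x \in G^`(1)%g.
Proof.
move=> Z1 /nr_in_ZG_center[z]; rewrite Z1 => /set1P-> det_irr.
rewrite -(cap_cfker_normal (der_normal 1 G)); apply/bigcapP => i.
rewrite -lin_irr_der1 => lin_i; rewrite cfkerEirr inE (lin_char1 lin_i).
by have := det_irr i; rewrite (cfDet_id lin_i) (lin_char1 lin_i) mulr1 => <-.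
Qed.

End ReducedNormCoefficients.

Lemma Frobenius_trivg_center (gT : finGroupType) (G K H : {group gT}) :
  [Frobenius G = K ><| H]%g -> 'Z(G)%g = 1%g.
Proof.
move=> frobG; have [defG ntK _ _ _] := Frobenius_context frobG.
have [sKG sHG] := mulG_sub (sdprodW defG).
have [k K1k] : exists k, k \in K^#%g by apply/set0Pn; rewrite setD_eq0 subG1.
have Gk : k \in G by case/setD1P: K1k => _ /(subsetP sKG).
apply/trivgP; rewrite -(Frobenius_trivg_cent frobG) subsetI.
apply/andP; split.
  apply: subset_trans (Frobenius_cent1_ker frobG K1k).
  by rewrite subsetI center_sub sub_cent1; apply/centP; apply: centerC Gk.
exact: subset_trans (subsetIr _ _) (centS sHG).
Qed.

Theorem lemma3p12 (gT : finGroupType) (G A : {group gT}) (x : gT) :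
  [Frobenius G = G^`(1) ><| A]%g ->
  (x \in G :\: G^`(1))%g ->
  ~ nr_in_ZG G x.
Proof.
move=> frobG /setDP[Gx G'x] ZGx; case/negP: G'x.
exact: nr_in_ZG_der1 Gx (Frobenius_trivg_center frobG) ZGx.
Qed.
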